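(* For any integers $q\ge 2$ and positive integers $w\le n$, there exists a $\mathrm{TOC}_q(n,2w,w)$ if and only if $\lfloor n/w\rfloor$ divides $(q-1)^w\binom{n}{w}$.
   Context: $\mathcal{H}_q(n,w)$ is the set of all words of length $n$ over $\mathbb{Z}_q$ with exactly $w$ nonzero entries, with the Hamming distance. An $(n,d,w)_q$-code is a nonempty subset of $\mathcal{H}_q(n,w)$ in which any two distinct words have Hamming distance at least $d$; $A_q(n,d,w)$ is the maximum size of such a code and a code of this size is optimal. A $\mathrm{TOC}_q(n,d,w)$ (tiling) is a partition of $\mathcal{H}_q(n,w)$ into mutually disjoint optimal $(n,d,w)_q$-codes. *)

From mathcomp Require Import all_boot.
Set Implicit Arguments. Unset Strict Implicit. Unset Printing Implicit Defensive.

(* Words of length n over Z_q, represented as functions 'I_n -> 'I_q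
   (the symbols 0,...,q-1 of Z_q; 0 is the symbol with value 0). *)
Definition word (q n : nat) := {ffun 'I_n -> 'I_q}.

Definition wt (q n : nat) (x : word q n) : nat := #|[set i | val (x i) != 0]|.

Definition hdist (q n : nat) (x y : word q n) : nat := #|[set i | x i != y i]|.

Definition Hqnw (q n w : nat) : {set word q n} := [set x | wt x == w].

Definition is_code (q n d w : nat) (C : {set word q n}) : bool :=
  [&& C \subset Hqnw q n w, C != set0 &
      [forall x in C, forall y in C, (x != y) ==> (d <= hdist x y)]].

Definition Aq (q n d w : nat) : nat :=
  \max_(C : {set word q n} | is_code d w C) #|C|.

Definition optimal_code (q n d w : nat) (C : {set word q n}) : bool :=
  is_code d w C && (#|C| == Aq q n d w).

Definition is_TOC (q n d w : nat) (P : {set {set word q n}}) : bool :=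
  partition P (Hqnw q n w) && [forall C in P, optimal_code d w C].

Definition TOC_exists (q n d w : nat) : Prop :=
  exists P : {set {set word q n}}, is_TOC d w P.

(* An (n,2w,w)_q-code is exactly a set of weight-w words with pairwise disjoint
   supports, since two weight-w words are at distance at most 2w with equality
   iff their supports are disjoint.  Hence A_q(n,2w,w) = m := n %/ w, and the
   codes of a tiling all have m words and partition the (q-1)^w C(n,w) words of
   weight w, which gives the divisibility.

   Conversely, let lam := (q-1)^w and suppose m divides lam C(n,w).  Baranyai's
   theorem gives t := lam C(n,w) / m rows of m pairwise disjoint w-subsets of
   [0,n) in which every w-subset occurs exactly lam times.  It is proved by
   adding the points one at a time; choosing, in each row, the block that
   receives the new point is a fractional problem whose solution is rounded by
   Hall's theorem with capacities.  As exactly lam words have a given support of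
   size w, the words of weight w can be assigned bijectively to the blocks, and
   every row becomes an optimal code. *)

From mathcomp Require Import all_boot zify.
Set Implicit Arguments. Unset Strict Implicit. Unset Printing Implicit Defensive.

Lemma sum_pred1_le (T : finType) (S : {set T}) (t : T) :
  \sum_(r in S) (r == t : nat) <= 1.
Proof.
apply: (@leq_trans (\sum_r (r == t : nat))).
  exact: (sub_le_big leqnn (fun m n => leq_addr n m)).
by rewrite (bigD1 t) //= eqxx big1 // => r /negbTE ->.
Qed.

Lemma leq_sum_eq (T : finType) (a b : T -> nat) :
  (forall r, a r <= b r) -> \sum_r a r = \sum_r b r -> forall r, a r = b r.
Proof.
move=> le_ab eq_sum r; apply/eqP.
have [_] := leqif_sum (fun r (_ : true) => leqif_eq (le_ab r)).
by rewrite eq_sum eqxx => /esym/forallP/(_ r).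
Qed.

Lemma sum_card_fibers (TL TR : finType) (A : {set TL}) (g : TL -> TR) :
  \sum_r #|[set l in A | g l == r]| = #|A|.
Proof.
rewrite -sum1_card (partition_big g predT) //=.
by apply: eq_bigr => r _; rewrite -sum1_card; apply: eq_bigl => l; rewrite inE.
Qed.

Lemma sum_bool_card (I : finType) (P : pred I) : \sum_i (P i : nat) = #|[set i | P i]|.
Proof.
rewrite -sum1_card [RHS]big_mkcond /=; apply: eq_bigr => i _.
by rewrite inE; case: (P i).
Qed.

Lemma sum_option (T : finType) (F : option T -> nat) :
  \sum_o F o = F None + \sum_x F (Some x).
Proof.
rewrite (bigD1 None) //=; congr (_ + _).
rewrite (reindex_omap Some id); last by case.
by apply: eq_bigl => x; rewrite eqxx.
Qed.

Lemma card_pairs (t m : nat) (P : 'I_t -> 'I_m -> bool) :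
  #|[set p : 'I_t * 'I_m | P p.1 p.2]| = \sum_i #|[set j | P i j]|.
Proof.
under [RHS]eq_bigr do rewrite -(sum_bool_card (P _)).
rewrite pair_big /= -(sum_bool_card (fun p : 'I_t * 'I_m => P p.1 p.2)).
by apply: eq_bigl.
Qed.

(** * Hall's theorem with capacities *)

Section CapacitatedHall.
Variables (TL TR : finType) (E : TL -> TR -> bool).

Definition nbh (X : {set TL}) : {set TR} := [set r | [exists l in X, E l r]].

Definition hall_condition (A : {set TL}) (d : TR -> nat) :=
  forall X : {set TL}, X \subset A -> #|X| <= \sum_(r in nbh X) d r.

Definition matching (A : {set TL}) (d : TR -> nat) (g : TL -> TR) :=
  (forall l, l \in A -> E l (g l)) /\ (forall r, #|[set l in A | g l == r]| <= d r).

Lemma nbhU X Y : nbh (X :|: Y) = nbh X :|: nbh Y.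
Proof.
apply/setP => r; rewrite !inE; apply/existsP/orP.
- by case=> l /andP[]; rewrite inE => /orP[] lX Elr; [left|right];
     apply/existsP; exists l; rewrite lX.
- by case=> /existsP[l /andP[lX Elr]]; exists l; rewrite inE lX ?orbT.
Qed.

Lemma sum_nbhU (d : TR -> nat) X Y :
  \sum_(r in nbh (X :|: Y)) d r =
  \sum_(r in nbh X) d r + \sum_(r in nbh Y) (if r \in nbh X then 0 else d r).
Proof.
rewrite nbhU (big_setID (nbh X)) setUK setDUl setDv set0U; congr (_ + _).
rewrite [RHS](big_setID (nbh X)) /= [X in X + _]big1 ?add0n; last first.
  by move=> r; rewrite in_setI => /andP[_ ->].
by apply: eq_bigr => r; rewrite in_setD => /andP[/negbTE -> _].
Qed.

Lemma matching_le A d d' g :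
  matching A d g -> (forall r, d r <= d' r) -> matching A d' g.
Proof. by move=> [EA cA] le_dd'; split=> // r; exact: leq_trans (cA r) (le_dd' r). Qed.

Lemma matching_nbh X d g :
  matching X d g -> matching X (fun r => if r \in nbh X then d r else 0) g.
Proof.
move=> [EX cX]; split=> // r; case: ifP => [_ | /negbT rN]; first exact: cX.
rewrite leqn0 cards_eq0; apply/eqP/setP => l; rewrite !inE.
apply/negbTE; apply: contra rN => /andP[lX /eqP <-].
by rewrite inE; apply/existsP; exists l; rewrite lX EX.
Qed.

Lemma matching1 l r : E l r -> matching [set l] (fun r' => r' == r) (fun=> r).
Proof.
move=> Elr; split=> [l' /set1P -> // | r'].
case: (r' =P r) => [-> | /eqP ne].
  by rewrite eqxx /= -(cards1 l) subset_leq_card //; apply/subsetP => l' /setIdP[].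
by rewrite leqn0 cards_eq0; apply/eqP/setP => l'; rewrite !inE (eq_sym r) (negbTE ne) andbF.
Qed.

Lemma matchingU X Y d1 d2 g1 g2 :
  matching X d1 g1 -> matching Y d2 g2 ->
  matching (X :|: Y) (fun r => d1 r + d2 r)
           (fun l => if l \in X then g1 l else g2 l).
Proof.
move=> [E1 c1] [E2 c2]; split=> [l | r].
  by rewrite inE; case: ifP => [lX _ | _ /= lY]; [exact: E1 | exact: E2].
apply: leq_trans (leq_add (c1 r) (c2 r)).
apply: leq_trans (leq_card_setU _ _); apply: subset_leq_card.
apply/subsetP => l; rewrite !inE.
by case: ifP => _ /= ->; rewrite ?orbT.
Qed.

Section HallStep.
Variables (A : {set TL}) (d : TR -> nat).
Hypothesis IH : forall (A' : {set TL}) d', #|A'| < #|A| -> hall_condition A' d' ->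
  exists g, matching A' d' g.
Hypothesis hallA : hall_condition A d.

Lemma hall_tight (X : {set TL}) : X \proper A -> X != set0 ->
  #|X| = \sum_(r in nbh X) d r -> exists g, matching A d g.
Proof.
move=> pXA nX0 tightX; have sXA := proper_sub pXA.
have [g1 mg1] := IH (proper_card pXA) (fun Y sYX => hallA (subset_trans sYX sXA)).
pose d2 r := if r \in nbh X then 0 else d r.
have [g2 mg2] : exists g, matching (A :\: X) d2 g.
  apply: IH => [|Y sY].
    by rewrite cardsD (setIidPr sXA) -card_gt0 in nX0 *; move: (subset_leq_card sXA); lia.
  have sYA : Y \subset A by apply: subset_trans sY (subsetDl _ _).
  have XY0 : X :&: Y = set0.
    by apply/setP => l; rewrite !inE; case: (boolP (l \in X)) => //= lX;
      apply/negbTE; apply: contraL lX => /(subsetP sY); rewrite inE => /andP[].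
  have := hallA (_ : X :|: Y \subset A); rewrite subUset sXA sYA => /(_ isT).
  by rewrite sum_nbhU -tightX cardsU XY0 cards0 subn0 leq_add2l.
have XUA : X :|: A :\: X = A.
  apply/setP => l; rewrite !inE; case: (boolP (l \in X)) => //= lX.
  by rewrite (subsetP sXA).
have := matchingU (matching_nbh mg1) mg2; rewrite XUA => mA.
by eexists; apply: matching_le mA _ => r; rewrite /d2; case: ifP; rewrite ?addn0.
Qed.

Lemma hall_slack l0 : l0 \in A ->
  (forall X : {set TL}, X \proper A -> X != set0 -> #|X| < \sum_(r in nbh X) d r) ->
  exists g, matching A d g.
Proof.
move=> l0A strict.
have [r1 /andP[r1N dr1] | none] := pickP [pred r | (r \in nbh [set l0]) && (0 < d r)];
  last first.
  have := hallA (_ : [set l0] \subset A); rewrite sub1set l0A cards1 => /(_ isT).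
  rewrite big1 // => r rN; apply/eqP; move: (none r) => /=.
  by rewrite rN lt0n => /negbFE.
have El0 : E l0 r1.
  by move: r1N; rewrite inE => /existsP[l /andP[/set1P ->]].
pose d' r := d r - (r == r1).
have d_split r : d r = d' r + (r == r1).
  by rewrite subnK //; case: eqP => // ->.
have [g' mg'] : exists g, matching (A :\ l0) d' g.
  apply: IH => [|Y sY]; first by rewrite (cardsD1 l0 A) l0A.
  have [-> | nY0] := eqVneq Y set0; first by rewrite cards0.
  have pYA : Y \proper A.
    apply/properP; split; first exact: subset_trans sY (subsetDl _ _).
    by exists l0 => //; apply/negP => /(subsetP sY); rewrite !inE eqxx.
  have := strict Y pYA nY0; rewrite (eq_bigr _ (fun r _ => d_split r)) big_split /=.
  by have := sum_pred1_le (nbh Y) r1; lia.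
have := matchingU (matching1 El0) mg'; rewrite setD1K // => mA.
by eexists; apply: matching_le mA _ => r; rewrite d_split addnC.
Qed.

End HallStep.

(* [r0] is only used as the image of [g] when [A] is empty. *)
Lemma exists_matching (r0 : TR) A d : hall_condition A d -> exists g, matching A d g.
Proof.
have [N] := ubnP #|A|; elim: N A d => // N IH A d /ltnSE leAN hallA.
have IHA (A' : {set TL}) d' : #|A'| < #|A| -> hall_condition A' d' ->
    exists g, matching A' d' g.
  by move=> ltA'; apply: IH; exact: leq_trans ltA' leAN.
have [-> | [l0 l0A]] := set_0Vmem A.
  exists (fun=> r0); split=> [l | r]; first by rewrite inE.
  suff -> : [set l in set0 | r0 == r] = set0 :> {set TL} by rewrite cards0.
  by apply/setP => l; rewrite !inE.
have [X /and3P[pXA nX0 /eqP tightX] | loose] :=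
  pickP [pred X : {set TL} | [&& X \proper A, X != set0 &
                                 #|X| == \sum_(r in nbh X) d r]].
  exact: hall_tight IHA hallA X pXA nX0 tightX.
apply: (hall_slack IHA hallA l0A) => X pXA nX0.
rewrite ltn_neqAle hallA ?proper_sub // andbT.
by move: (loose X) => /=; rewrite pXA nX0 => /negbT.
Qed.

End CapacitatedHall.

Section Rounding.
Variables (TL TR : finType) (f : TL -> TR -> nat) (D : nat).
Hypothesis D_gt0 : 0 < D.
Hypothesis row_sum : forall l, \sum_r f l r = D.

Let support l r := 0 < f l r.

Lemma weights_hall_condition (c : TR -> nat) :
  (forall r, \sum_l f l r <= D * c r) -> hall_condition support [set: TL] c.
Proof.
move=> col_le X _; rewrite -(leq_pmul2l D_gt0) big_distrr /=.
have -> : D * #|X| = \sum_(l in X) \sum_(r in nbh support X) f l r.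
  rewrite mulnC -sum_nat_const; apply: eq_bigr => l lX.
  rewrite -(row_sum l) [LHS](bigID (mem (nbh support X))) /=.
  rewrite [X in _ + X]big1 ?addn0 // => r rN.
  apply/eqP; rewrite eqn0Ngt; apply: contra rN => f_gt0.
  by rewrite inE; apply/existsP; exists l; rewrite lX.
rewrite exchange_big /=; apply: leq_sum => r _; apply: leq_trans (col_le r).
exact: (sub_le_big leqnn (fun m n => leq_addr n m)).
Qed.

(* Only the capacity of the slack column [r0] is free; choosing it so that all
   capacities add up to [#|TL|] forces every load of the matching to be exact. *)
Lemma round_weights (r0 : TR) (d : TR -> nat) :
  (forall r, r != r0 -> \sum_l f l r = D * d r) ->
  exists g : TL -> TR, (forall l, 0 < f l (g l)) /\
    (forall r, r != r0 -> #|[set l | g l == r]| = d r).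
Proof.
move=> col_sum; pose s := \sum_(r | r != r0) d r.
have total : D * s + \sum_l f l r0 = #|TL| * D.
  rewrite -sum_nat_const -(eq_bigr _ (fun l _ => row_sum l)) exchange_big /=.
  rewrite [RHS](bigD1 r0) //= addnC big_distrr /=; congr (_ + _).
  by apply: eq_bigr => r /col_sum.
pose c r := if r == r0 then #|TL| - s else d r.
have [g [gE gc]] : exists g, matching support [set: TL] c g.
  apply: (exists_matching r0 (weights_hall_condition _)) => r.
  rewrite /c; case: eqP => [-> | /eqP /col_sum -> //].
  rewrite mulnBr; move: total; lia.
have c_sum : \sum_r c r = #|TL|.
  rewrite (bigD1 r0) //= /c eqxx (eq_bigr d) => [|r /negbTE -> //].
  rewrite subnK // -(leq_pmul2l D_gt0); move: total; lia.
have := leq_sum_eq gc; rewrite sum_card_fibers cardsT c_sum => /(_ erefl) loads.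
exists g; split=> [l | r r_ne0]; first exact: gE.
have := loads r; rewrite /c (negbTE r_ne0) => <-.
by apply: eq_card => l; rewrite !inE.
Qed.

End Rounding.

(** * Baranyai's theorem *)

Definition block_mult (T : finType) (m : nat) (R : 'I_m -> {set T}) (Z : {set T}) :=
  #|[set j | R j == Z]|.

Lemma sum_block_mult (T : finType) (m : nat) (R : 'I_m -> {set T}) (h : {set T} -> nat) :
  \sum_Z block_mult R Z * h Z = \sum_j h (R j).
Proof.
rewrite [RHS](partition_big R predT) //; apply: eq_bigr => Z _.
rewrite (eq_bigr (fun=> h Z)) => [|j /andP[_ /eqP -> //]].
by rewrite sum_nat_const; congr (_ * _); apply: eq_card => j; rewrite !inE.
Qed.

Section ExtendRow.
Variables (T : finType) (m : nat) (B : 'I_m -> {set T}) (s : option 'I_m) (x : T).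

Definition extend_row (j : 'I_m) : {set T} := if s == Some j then x |: B j else B j.

Hypothesis x_notin : forall j, x \notin B j.

Lemma card_extend_row j : #|extend_row j| = #|B j| + (s == Some j).
Proof.
by rewrite /extend_row; case: eqP => _; rewrite ?cardsU1 ?x_notin ?addn0 1?addnC.
Qed.

Lemma sum_card_extend_row : \sum_j #|extend_row j| = \sum_j #|B j| + (s != None).
Proof.
rewrite (eq_bigr _ (fun j _ => card_extend_row j)) big_split /=; congr (_ + _).
case: s => [j0 | ]; last by rewrite big1.
rewrite (bigD1 j0) //= eqxx big1 // => j ne.
by rewrite (inj_eq Some_inj) eq_sym (negbTE ne).
Qed.

Lemma mem_extend_row j y :
  (y \in extend_row j) = (y == x) && (s == Some j) || (y \in B j).
Proof. by rewrite /extend_row; case: (s == Some j); rewrite ?in_setU1 ?andbT ?andbF. Qed.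

Lemma extend_row_disjoint :
  (forall j j', j != j' -> [disjoint B j & B j']) ->
  forall j j', j != j' -> [disjoint extend_row j & extend_row j'].
Proof.
move=> disjB j j' ne; rewrite -setI_eq0; apply/eqP/setP => y.
rewrite inE in_set0 !mem_extend_row; apply/negbTE/negP.
case/andP=> /orP[/andP[/eqP-> /eqP->] | yj] /orP[/andP[/eqP yx /eqP sj'] | yj'].
- by move: sj' ne => [->]; rewrite eqxx.
- by rewrite (negbTE (x_notin j')) in yj'.
- by rewrite yx (negbTE (x_notin j)) in yj.
- by rewrite (disjointFr (disjB j j' ne) yj) in yj'.
Qed.

Lemma block_mult_extend_notin (Z : {set T}) : x \notin Z ->
  block_mult extend_row Z + (omap B s == Some Z) = block_mult B Z.
Proof.
move=> xZ; rewrite /block_mult /extend_row; case: s => [j0 | ] /=; last first.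
  by rewrite addn0.
rewrite (cardsD1 j0) [in RHS](cardsD1 j0) !inE eqxx.
have -> : (x |: B j0 == Z) = false by apply: contraNF xZ => /eqP <-; exact: setU11.
rewrite add0n addnC; congr (_ + _); apply: eq_card => j; rewrite !inE.
by case: eqVneq => [-> | ne] //=; rewrite (inj_eq Some_inj) (eq_sym j0) (negbTE ne).
Qed.

Lemma block_mult_extend_in (Z : {set T}) : x \in Z ->
  block_mult extend_row Z = (omap B s == Some (Z :\ x)).
Proof.
move=> xZ; rewrite /block_mult /extend_row.
have BZ j : (B j == Z) = false by apply: contraNF (x_notin j) => /eqP ->.
case: s => [j0 | ] /=; last first.
  by apply/eqP; rewrite cards_eq0; apply/eqP/setP => j; rewrite !inE BZ.
rewrite (cardsD1 j0) !inE eqxx.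
have -> : (x |: B j0 == Z) = (B j0 == Z :\ x).
  by apply/eqP/eqP => [<- | ->]; [rewrite setU1K | rewrite setD1K].
rewrite -[RHS]addn0; congr (_ + _); apply/eqP; rewrite cards_eq0; apply/eqP/setP => j.
rewrite !inE; case: eqVneq => [-> | ne] //=.
by rewrite (inj_eq Some_inj) (eq_sym j0) (negbTE ne) BZ.
Qed.

End ExtendRow.

Section Baranyai.
Variables (n w m lam t : nat).
Hypothesis mw_le_n : m * w <= n.
Hypothesis tm_eq : t * m = lam * 'C(n, w).

Definition below (l : nat) : {set 'I_n} := [set y : 'I_n | y < l].

(* lam times the number of ways to complete [S] to a [w]-set with points >= [l] *)
Definition target_mult l (S : {set 'I_n}) :=
  if (S \subset below l) && (#|S| <= w) then lam * 'C(n - l, w - #|S|) else 0.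

Definition step_mult l (S : {set 'I_n}) :=
  if (S \subset below l) && (#|S| < w) then lam * 'C((n - l).-1, (w - #|S|).-1) else 0.

(* Stage [l]: the first [l] points are placed, each row leaving at most
   [n - m * w] of them uncovered. *)
Definition baranyai_inv l (F : 'I_t -> 'I_m -> {set 'I_n}) :=
  [/\ forall i j, F i j \subset below l,
      forall i j j', j != j' -> [disjoint F i j & F i j'],
      forall i j, #|F i j| <= w,
      forall i, l <= \sum_j #|F i j| + (n - m * w) &
      forall S, \sum_i block_mult (F i) S = target_mult l S].

Lemma subset_belowS (x : 'I_n) l (S : {set 'I_n}) : val x = l ->
  (S \subset below l.+1) = (S :\ x \subset below l).
Proof.
move=> xl; apply/subsetP/subsetP => sub y.
  rewrite !inE => /andP[yx /sub]; rewrite inE ltnS leq_eqVlt => /orP[/eqP yl | //].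
  suff yx' : y = x by rewrite yx' eqxx in yx.
  by apply: val_inj; rewrite /= yl xl.
move=> yS; have [-> | yx] := eqVneq y x; first by rewrite inE xl.
by have := sub y; rewrite !inE yx yS => /(_ isT) /ltnW.
Qed.

Lemma target_mult_step l (S : {set 'I_n}) :
  (w - #|S|) * target_mult l S = (n - l) * step_mult l S.
Proof.
rewrite /target_mult /step_mult; case: (S \subset below l) => /=; last by rewrite !muln0.
case: ltngtP => hS; rewrite ?muln0 //; last by rewrite hS subnn mul0n.
have [k ->] : exists k, w - #|S| = k.+1 by exists (w - #|S|).-1; rewrite prednK // subn_gt0.
by rewrite /= mulnCA [RHS]mulnCA mul_bin_diag.
Qed.

Lemma target_mult_succ_notin (x : 'I_n) l (S : {set 'I_n}) : val x = l -> x \notin S ->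
  target_mult l.+1 S + step_mult l S = target_mult l S.
Proof.
move=> xl xS; have SxS : S :\ x = S by apply/setDidPl; rewrite disjoint_sym disjoints1.
rewrite /target_mult /step_mult (subset_belowS _ xl) SxS.
case: (S \subset below l) => //=.
have [N nlE] : exists N, n - l = N.+1.
  by exists (n - l).-1; rewrite prednK // subn_gt0 -xl ltn_ord.
rewrite subnS nlE /=; case: ltngtP => hS //=; last by rewrite hS subnn !bin0 addn0.
have [k ->] : exists k, w - #|S| = k.+1 by exists (w - #|S|).-1; rewrite prednK // subn_gt0.
by rewrite binS mulnDr.
Qed.

Lemma target_mult_succ_in (x : 'I_n) l (S : {set 'I_n}) : val x = l -> x \in S ->
  target_mult l.+1 S = step_mult l (S :\ x).
Proof.
move=> xl xS; rewrite /target_mult /step_mult (subset_belowS _ xl) (cardsD1 x S) xS.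
by rewrite add1n !subnS.
Qed.

Lemma baranyai_inv0 : baranyai_inv 0 (fun _ _ => set0).
Proof.
split=> [i j | i j j' _ | i j | i | S]; rewrite ?sub0set ?cards0 //.
  by rewrite -setI_eq0 set0I.
have [-> | nS0] := eqVneq S set0.
  rewrite /target_mult sub0set cards0 !subn0 -tm_eq.
  rewrite (eq_bigr (fun=> m)) ?sum_nat_const ?card_ord // => i _.
  by rewrite /block_mult -[RHS]card_ord -cardsT; apply: eq_card => j; rewrite !inE eqxx.
have below0 : below 0 = set0 by apply/setP => y; rewrite !inE.
rewrite /target_mult below0 subset0 (negbTE nS0); apply: big1 => i _.
by apply/eqP; rewrite cards_eq0; apply/eqP/setP => j; rewrite !inE eq_sym (negbTE nS0).
Qed.


Section Step.
Variables (l : nat) (F : 'I_t -> 'I_m -> {set 'I_n}).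
Hypothesis invF : baranyai_inv l F.

(* Row [i] puts weight [w - #|Z|] on each of its blocks [Z] and its remaining
   slack on [None]: every row then sums to [n - l], and by [target_mult_step]
   the column of [Z] sums to [n - l] times [step_mult l Z]. *)
Lemma exists_selection : l < n -> exists sel : 'I_t -> option 'I_m,
  [/\ forall i j, sel i = Some j -> #|F i j| < w,
      forall i, sel i = None -> l < \sum_j #|F i j| + (n - m * w) &
      forall Z, #|[set i | omap (F i) (sel i) == Some Z]| = step_mult l Z].
Proof.
move=> lt_ln; case: invF => _ _ Fw slack mult.
pose f i (o : option {set 'I_n}) :=
  if o is Some Z then block_mult (F i) Z * (w - #|Z|)
  else \sum_j #|F i j| + (n - m * w) - l.
have D_gt0 : 0 < n - l by rewrite subn_gt0.
have row_sum i : \sum_o f i o = n - l.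
  have c_le : \sum_j #|F i j| <= \sum_(j < m) w by apply: leq_sum => j _; exact: Fw.
  rewrite sum_option /= sum_block_mult sumnB => [|j _]; last exact: Fw.
  rewrite sum_nat_const card_ord in c_le *; set c := \sum_j #|F i j| in c_le *.
  by move: (slack i); rewrite -/c; lia.
pose d o := if o is Some Z then step_mult l Z else 0.
have col_sum o : o != None -> \sum_i f i o = (n - l) * d o.
  by case: o => // Z _; rewrite -big_distrl /= mult mulnC target_mult_step.
have [g [g_pos g_mult]] := round_weights D_gt0 row_sum col_sum.
pose sel i := if g i is Some Z then [pick j | F i j == Z] else None.
have sel_g i : omap (F i) (sel i) = g i.
  rewrite /sel; case g_i: (g i) => [Z | ] //.
  case: pickP => [j /eqP Fj | none]; first by rewrite /= Fj.
  have := g_pos i; rewrite g_i /= muln_gt0 /block_mult card_gt0 => /andP[/set0Pn[j]].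
  by rewrite inE none.
exists sel; split=> [i j sel_i | i sel_i | Z].
- by have := g_pos i; rewrite -sel_g sel_i /= muln_gt0 subn_gt0 => /andP[].
- by have := g_pos i; rewrite -sel_g sel_i /=; lia.
- by rewrite -[RHS]/(d (Some Z)) -g_mult //; apply: eq_card => i; rewrite !inE sel_g.
Qed.

Lemma baranyai_inv_extend (x : 'I_n) (sel : 'I_t -> option 'I_m) : val x = l ->
  (forall i j, sel i = Some j -> #|F i j| < w) ->
  (forall i, sel i = None -> l < \sum_j #|F i j| + (n - m * w)) ->
  (forall Z, #|[set i | omap (F i) (sel i) == Some Z]| = step_mult l Z) ->
  baranyai_inv l.+1 (fun i => extend_row (F i) (sel i) x).
Proof.
move=> xl sel_lt sel_slack sel_mult; case: invF => Fl Fdisj Fw slack mult.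
have x_notin i j : x \notin F i j.
  by apply/negP => /(subsetP (Fl i j)); rewrite inE xl ltnn.
split=> [i j | i | i j | i | S].
- apply/subsetP => y; rewrite mem_extend_row inE.
  case/orP=> [/andP[/eqP -> _] | /(subsetP (Fl i j))]; first by rewrite xl.
  by rewrite inE => /ltnW.
- exact: extend_row_disjoint (x_notin i) (Fdisj i).
- rewrite card_extend_row //; case: eqP => [/sel_lt | _]; first by rewrite addn1.
  by rewrite addn0.
- rewrite sum_card_extend_row //; case sel_i: (sel i) => [j | ] /=.
    by rewrite addn1 addSn ltnS; exact: slack.
  by rewrite addn0; exact: sel_slack.
have [xS | xS] := boolP (x \in S).
  rewrite (target_mult_succ_in xl xS) -sel_mult -sum_bool_card; apply: eq_bigr => i _.
  exact: block_mult_extend_in.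
apply/eqP; rewrite -(eqn_add2r (step_mult l S)) (target_mult_succ_notin xl xS) -mult.
rewrite -sel_mult -sum_bool_card -big_split /=; apply/eqP/eq_bigr => i _.
exact: block_mult_extend_notin.
Qed.

End Step.

Lemma baranyai_inv_succ l F : l < n -> baranyai_inv l F -> exists F', baranyai_inv l.+1 F'.
Proof.
move=> lt_ln invF; have [sel [sel_lt sel_slack sel_mult]] := exists_selection invF lt_ln.
by eexists; apply: (baranyai_inv_extend invF (x := Ordinal lt_ln) _ sel_lt sel_slack).
Qed.

Lemma exists_baranyai_inv l : l <= n -> exists F, baranyai_inv l F.
Proof.
elim: l => [_ | l IH lt_ln]; first by exists (fun _ _ => set0); exact: baranyai_inv0.
by have [F invF] := IH (ltnW lt_ln); exact: baranyai_inv_succ lt_ln invF.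
Qed.

Theorem baranyai : exists F : 'I_t -> 'I_m -> {set 'I_n},
  [/\ forall i j, #|F i j| = w,
      forall i j j', j != j' -> [disjoint F i j & F i j'] &
      forall S : {set 'I_n}, #|S| = w -> #|[set p : 'I_t * 'I_m | F p.1 p.2 == S]| = lam].
Proof.
have [F [_ Fdisj Fw _ mult]] := exists_baranyai_inv (leqnn n).
have below_n (S : {set 'I_n}) : S \subset below n.
  by apply/subsetP => y _; rewrite inE ltn_ord.
exists F; split=> // [i j | S cS].
  apply/eqP; rewrite eqn_leq Fw leqNgt; apply/negP => lt_w.
  have := mult (F i j); rewrite /target_mult below_n (ltnW lt_w) subnn /= bin0n.
  rewrite (_ : (w - #|F i j| == 0) = false) ?muln0; last by rewrite subn_eq0 leqNgt lt_w.
  move/eqP; rewrite sum_nat_eq0 => /forallP/(_ i).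
  by rewrite /block_mult cards_eq0 => /eqP/setP/(_ j); rewrite !inE eqxx.
rewrite (card_pairs (fun i j => F i j == S)) mult /target_mult below_n cS leqnn.
by rewrite !subnn muln1.
Qed.

End Baranyai.

(** * Codes of minimum distance twice their weight *)

Lemma fiber_bijection (P X K : finType) (A : {set X}) (f : P -> K) (h : X -> K) (x0 : X) :
  (forall k, #|[set p | f p == k]| = #|[set x in A | h x == k]|) ->
  exists g : P -> X, [/\ injective g, forall p, h (g p) = f p & [set g p | p : P] = A].
Proof.
move=> fibers; pose Ps k := enum [set p | f p == k].
pose Xs k := enum [set x in A | h x == k].
have size_fibers k : size (Ps k) = size (Xs k) by rewrite -!cardE fibers.
have Ps_f p : p \in Ps (f p) by rewrite mem_enum inE.
pose g p := nth x0 (Xs (f p)) (index p (Ps (f p))).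
have index_lt p : index p (Ps (f p)) < size (Xs (f p)) by rewrite -size_fibers index_mem.
have g_Xs p : g p \in Xs (f p) by exact: mem_nth.
have h_g p : h (g p) = f p by move: (g_Xs p); rewrite mem_enum inE => /andP[_ /eqP].
exists g; split=> // [p p' gE | ].
  have fE : f p = f p' by rewrite -!h_g gE.
  have : index p (Ps (f p)) = index p' (Ps (f p)).
    apply/eqP; rewrite -(nth_uniq x0 (index_lt p) _ (enum_uniq _)); last by rewrite fE.
    by apply/eqP; move: gE; rewrite /g fE.
  by move/(congr1 (nth p (Ps (f p)))); rewrite !nth_index // fE.
apply/setP => x; apply/imsetP/idP => [[p _ ->] | xA].
  by move: (g_Xs p); rewrite mem_enum inE => /andP[].
have xXs : x \in Xs (h x) by rewrite mem_enum inE xA eqxx.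
have lt_x : index x (Xs (h x)) < size (Ps (h x)) by rewrite size_fibers index_mem.
have [p0 _] : exists p0 : P, true.
  by case: (Ps (h x)) lt_x => // p0 _ _; exists p0.
pose p := nth p0 (Ps (h x)) (index x (Xs (h x))).
have fp : f p = h x by move: (mem_nth p0 lt_x); rewrite mem_enum inE => /eqP.
exists p => //; rewrite /g fp index_uniq ?enum_uniq //.
by rewrite nth_index.
Qed.

Lemma partition_rows (X : finType) (t m : nat) (g : 'I_t * 'I_m -> X) :
  injective g -> 0 < m ->
  partition [set [set g (i, j) | j : 'I_m] | i : 'I_t] [set g p | p : 'I_t * 'I_m].
Proof.
move=> g_inj m_gt0; pose B i := [set g (i, j) | j : 'I_m].
have B_neq0 i : B i != set0.
  by apply/set0Pn; exists (g (i, Ordinal m_gt0)); apply: imset_f.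
have B0 : set0 \notin [set B i | i : 'I_t].
  by apply/imsetP => -[i _ /esym/eqP]; rewrite (negbTE (B_neq0 i)).
have disjB i i' : i' != i -> [disjoint B i & B i'].
  move=> ne; rewrite -setI_eq0; apply/eqP/setP => x; rewrite !inE.
  apply/negbTE/negP => /andP[/imsetP[j _ ->] /imsetP[j' _ /g_inj [ii' _]]].
  by rewrite ii' eqxx in ne.
have [tiB _] := trivIimset (fun i i' _ _ => disjB i i') B0.
apply/and3P; split=> //.
rewrite cover_imset; apply/eqP/setP => x; apply/bigcupP/imsetP.
  by case=> i _ /imsetP[j _ ->]; exists (i, j).
by case=> -[i j] _ ->; exists i => //; apply: imset_f.
Qed.

Section Words.
Variables (q n : nat).
Hypothesis q_gt1 : 1 < q.

Definition supp (x : word q n) : {set 'I_n} := [set i | val (x i) != 0].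

Definition zero_symbol : 'I_q := Ordinal (ltnW q_gt1).

Definition indicator_word (S : {set 'I_n}) : word q n :=
  [ffun i => if i \in S then Ordinal q_gt1 else zero_symbol].

Lemma supp_indicator_word S : supp (indicator_word S) = S.
Proof. by apply/setP => i; rewrite !inE ffunE; case: (i \in S). Qed.

Lemma neq_zero_symbol (v : 'I_q) : (v != zero_symbol) = (val v != 0).
Proof. by rewrite -val_eqE. Qed.

Lemma card_supp_eq S : #|[set x : word q n | supp x == S]| = (q - 1) ^ #|S|.
Proof.
rewrite subn1 -[q in q.-1]card_ord -(cardC1 zero_symbol) -(card_pffun_on zero_symbol).
apply: eq_card => x; rewrite inE; apply/eqP/pffun_onP => [<- | [sub on_S]].
  split; first by apply/subsetP => i; rewrite !inE neq_zero_symbol.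
  by move=> _ /imageP[i iS ->]; rewrite !inE neq_zero_symbol; rewrite inE in iS.
apply/setP => i; rewrite inE -neq_zero_symbol; apply/idP/idP => [x_i | iS].
  by apply: (subsetP sub); rewrite inE.
by have := on_S (x i) (image_f x iS); rewrite !inE.
Qed.

Lemma card_Hqnw w : #|Hqnw q n w| = (q - 1) ^ w * 'C(n, w).
Proof.
rewrite -sum1_card (partition_big supp [pred S : {set 'I_n} | #|S| == w]) /=;
  last by move=> x; rewrite inE.
rewrite (eq_bigr (fun _ => (q - 1) ^ w)) => [|S /eqP cS]; last first.
  rewrite -cS -card_supp_eq -sum1_card; apply: eq_bigl => x.
  rewrite !inE; case: (supp x =P S) => [xS | _]; rewrite ?andbT ?andbF //.
  by rewrite /wt -/(supp x) xS eqxx.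
rewrite sum_nat_const mulnC -[n in 'C(n, w)]card_ord -card_draws; congr (_ * _).
by apply: eq_card => S; rewrite !inE.
Qed.

Lemma hdist_subset_supp (x y : word q n) : [set i | x i != y i] \subset supp x :|: supp y.
Proof.
apply/subsetP => i; rewrite !inE; apply: contraR; rewrite negb_or !negbK.
by case/andP=> /eqP x0 /eqP y0; apply/eqP/val_inj; rewrite x0 y0.
Qed.

Lemma hdist_disjoint_supp (x y : word q n) :
  [disjoint supp x & supp y] -> hdist x y = #|supp x| + #|supp y|.
Proof.
rewrite /hdist => disj.
have -> : [set i | x i != y i] = supp x :|: supp y.
  apply/eqP; rewrite eqEsubset hdist_subset_supp; apply/subsetP => i.
  have supp_eq : x i = y i -> (i \in supp x) = (i \in supp y) by move=> xy; rewrite !inE xy.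
  rewrite in_setU inE => /orP[xi | yi]; apply/negP => /eqP/supp_eq xy.
    by move: (disjointFr disj xi); rewrite -xy xi.
  by move: (disjointFl disj yi); rewrite xy yi.
by rewrite cardsU; move: disj; rewrite -setI_eq0 => /eqP ->; rewrite cards0 subn0.
Qed.

Lemma far_wordsP w (x y : word q n) : wt x = w -> wt y = w ->
  reflect [disjoint supp x & supp y] (2 * w <= hdist x y).
Proof.
rewrite /wt -/(supp x) -/(supp y) => wx wy; apply: (iffP idP) => [far | disj].
  rewrite -(leq_card_setU (supp x) (supp y)).2 eqn_leq (leq_card_setU _ _).1 /=.
  by rewrite wx wy addnn -mul2n (leq_trans far) ?subset_leq_card ?hdist_subset_supp.
by rewrite hdist_disjoint_supp // wx wy mul2n addnn.
Qed.

Lemma is_code_disjointE w (C : {set word q n}) : is_code (2 * w) w C =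
  [&& C \subset Hqnw q n w, C != set0 &
      [forall x in C, forall y in C, (x != y) ==> [disjoint supp x & supp y]]].
Proof.
rewrite /is_code; case CH: (C \subset _) => //=; congr (_ && _).
have wC z : z \in C -> wt z = w by move/(subsetP CH); rewrite inE => /eqP.
apply: eq_forallb_in => x xC; apply: eq_forallb_in => y yC; congr (_ ==> _).
exact/(sameP (far_wordsP (wC x xC) (wC y yC)))/idP.
Qed.

Lemma code_card_le w (C : {set word q n}) : is_code (2 * w) w C -> #|C| * w <= n.
Proof.
have [-> _ | w_gt0] := posnP w; first by rewrite muln0.
rewrite is_code_disjointE => /and3P[CH _ /forall_inP disj].
have wC x : x \in C -> #|supp x| = w by move/(subsetP CH); rewrite inE => /eqP.
have disjC : {in C &, forall x y, y != x -> [disjoint supp x & supp y]}.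
  move=> x y xC yC ne; move/forall_inP: (disj x xC) => /(_ y yC) /implyP.
  by apply; rewrite eq_sym.
have supp_neq0 : set0 \notin [set supp x | x in C].
  apply/imsetP => -[x xC supp_x0]; have := wC x xC.
  by rewrite -supp_x0 cards0 => w0; rewrite -w0 in w_gt0.
have [tiC injC] := trivIimset disjC supp_neq0.
rewrite -sum_nat_const -(eq_bigr _ wC).
rewrite -(big_imset (fun S : {set 'I_n} => #|S|) injC) /=.
by rewrite -(eqTleqif (leq_card_cover _) tiC) -[n in _ <= n]card_ord max_card.
Qed.

Lemma disjoint_words_code w m (G : 'I_m -> word q n) : 0 < w -> 0 < m ->
  (forall j, wt (G j) = w) ->
  (forall j j', j != j' -> [disjoint supp (G j) & supp (G j')]) ->
  is_code (2 * w) w [set G j | j : 'I_m] /\ #|[set G j | j : 'I_m]| = m.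
Proof.
move=> w_gt0 m_gt0 wG disjG.
have G_inj : injective G.
  move=> j j' Gjj'; apply/eqP; apply: contraT => ne.
  have := disjG j j' ne; rewrite Gjj' -setI_eq0 setIid -cards_eq0.
  by have := wG j'; rewrite /wt -/(supp _) => ->; rewrite eqn0Ngt w_gt0.
have cardG : #|[set G j | j : 'I_m]| = m by rewrite card_imset // card_ord.
split=> //; rewrite is_code_disjointE -card_gt0 cardG m_gt0 /=; apply/andP; split.
  by apply/subsetP => _ /imsetP[j _ ->]; rewrite inE wG.
apply/forall_inP => _ /imsetP[j _ ->]; apply/forall_inP => _ /imsetP[j' _ ->].
by apply/implyP => ne; apply: disjG; apply: contraNneq ne => ->.
Qed.

Lemma exists_code_card w : 0 < w -> w <= n ->
  exists C : {set word q n}, is_code (2 * w) w C /\ #|C| = n %/ w.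
Proof.
(* A Baranyai design with [lam = m] and [t = C(n, w)] exists unconditionally. *)
move=> w_gt0 le_wn; have [F [Fw Fdisj _]] :=
  @baranyai n w (n %/ w) (n %/ w) 'C(n, w) (leq_divM n w) (mulnC _ _).
have i0 : 'I_('C(n, w)) by exists 0; rewrite bin_gt0.
exists [set indicator_word (F i0 j) | j : 'I_(n %/ w)].
apply: disjoint_words_code => [||j | j j' ne]; rewrite ?divn_gt0 //.
  by rewrite /wt -/(supp _) supp_indicator_word Fw.
by rewrite !supp_indicator_word Fdisj.
Qed.

Lemma Aq_2w w : 0 < w -> w <= n -> Aq q n (2 * w) w = n %/ w.
Proof.
move=> w_gt0 le_wn; apply/eqP; rewrite eqn_leq; apply/andP; split.
  by apply/bigmax_leqP => C Ccode; rewrite leq_divRL // code_card_le.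
by have [C [Ccode <-]] := exists_code_card w_gt0 le_wn; exact: leq_bigmax_cond.
Qed.

Lemma card_Hqnw_supp w S :
  #|[set x in Hqnw q n w | supp x == S]| = (#|S| == w) * (q - 1) ^ w.
Proof.
case: eqP => [<- | neq]; rewrite ?mul1n ?mul0n.
  rewrite -card_supp_eq; apply: eq_card => x; rewrite !inE.
  by case: (supp x =P S) => [<- | _]; rewrite ?andbF ?andbT // eqxx.
apply/eqP; rewrite cards_eq0; apply/eqP/setP => x; rewrite !inE.
by apply/negbTE/negP => /andP[/eqP wx /eqP sx]; apply: neq; rewrite -sx.
Qed.

Lemma toc_of_divisible w : 0 < w -> w <= n ->
  n %/ w %| (q - 1) ^ w * 'C(n, w) -> TOC_exists q n (2 * w) w.
Proof.
move=> w_gt0 le_wn dvd_m; pose m := n %/ w; pose lam := (q - 1) ^ w.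
pose t := lam * 'C(n, w) %/ m; have m_gt0 : 0 < m by rewrite divn_gt0.
have [F [Fw Fdisj Fmult]] := @baranyai n w m lam t (leq_divM n w) (divnK dvd_m).
have [g [g_inj supp_g g_im]] : exists g : 'I_t * 'I_m -> word q n,
    [/\ injective g, forall p, supp (g p) = F p.1 p.2 & [set g p | p : _] = Hqnw q n w].
  apply: (fiber_bijection (f := fun p => F p.1 p.2) (indicator_word set0)) => S.
  rewrite card_Hqnw_supp; case: eqP => [/Fmult -> | neq]; rewrite ?mul1n ?mul0n //.
  apply/eqP; rewrite cards_eq0; apply/eqP/setP => p; rewrite !inE.
  by apply/negbTE/eqP => FS; apply: neq; rewrite -FS Fw.
exists [set [set g (i, j) | j : 'I_m] | i : 'I_t].
apply/andP; split; first by rewrite -g_im; exact: partition_rows.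
apply/forall_inP => _ /imsetP[i _ ->].
have [Bcode Bcard] : is_code (2 * w) w [set g (i, j) | j : 'I_m] /\
    #|[set g (i, j) | j : 'I_m]| = m.
  apply: disjoint_words_code => // [j | j j' ne]; last by rewrite !supp_g Fdisj.
  by rewrite /wt -/(supp _) supp_g Fw.
by rewrite /optimal_code Bcode Bcard Aq_2w //=; apply/eqP.
Qed.

Lemma divisible_of_toc w : 0 < w -> w <= n ->
  TOC_exists q n (2 * w) w -> n %/ w %| (q - 1) ^ w * 'C(n, w).
Proof.
move=> w_gt0 le_wn [P /andP[partP /forall_inP optP]].
rewrite -card_Hqnw (@card_uniform_partition _ (n %/ w) _ _ _ partP) ?dvdn_mull // => C CP.
by case/andP: (optP C CP) => _ /eqP ->; exact: Aq_2w.
Qed.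

End Words.

Theorem theorem3p7 (q n w : nat) :
  2 <= q -> 0 < w -> w <= n ->
  (TOC_exists q n (2 * w) w <-> (n %/ w) %| (q - 1) ^ w * 'C(n, w)).
Proof.
move=> q_ge2 w_gt0 le_wn; split; [exact: divisible_of_toc | exact: toc_of_divisible].
Qed.
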